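(* Let $a,b,c\in\mathbb{Z}$ with $a,b$ odd, $c\equiv2\pmod4$, and $ab(a+b)c$ a nonzero perfect square. If the equation $ax^2+by^2=cz^2$ is partition regular with respect to $x,y$, then $ab\equiv1\pmod 8$.
   Context: The equation $ax^2+by^2=cz^2$ is partition regular with respect to $x,y$ if for every finite coloring of $\mathbb{N}=\{1,2,\dots\}$ there exist distinct $x,y\in\mathbb{N}$ of the same color and $z\in\mathbb{N}$ with $ax^2+by^2=cz^2$. A perfect square is $k^2$, $k\in\mathbb{Z}$. *)

From Stdlib Require Import ZArith.
Open Scope Z_scope.

Definition is_square (n : Z) : Prop := exists k : Z, n = k * k.

(* N = {1,2,...} is represented by the positive integers.  A finite coloring
   of N is a map col from N into {0,...,r-1} for some r; col is only
   constrained on positive integers. *)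
Definition partition_regular_xy (a b c : Z) : Prop :=
  forall (r : nat) (col : Z -> nat),
    (forall n : Z, 0 < n -> (col n < r)%nat) ->
    exists x y z : Z,
      0 < x /\ 0 < y /\ 0 < z /\ x <> y /\ col x = col y /\
      a * x ^ 2 + b * y ^ 2 = c * z ^ 2.

(* Color n by the residue of its odd part modulo m := 4 (a+b)^2.  A monochromatic
   solution can be reduced (c = 2 mod 4 forces x, y, z to carry the same power of 2)
   to one whose x, y are odd and congruent mod m.  Since ab(a+b)c = k^2,
   (kz)^2 - ab (a+b)^2 x^2 = ab(a+b) b (y-x)(y+x), so ab (a+b)^2 x^2 is a square
   modulo 8 (a+b)^2.  Cancelling the powers of 2 in a+b leaves ab times an odd square
   congruent to a square mod 8, hence ab = 1 mod 8. *)

From Stdlib Require Import ZArith Lia.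
Open Scope Z_scope.

Lemma odd_sqr_mod8 (x : Z) : Z.odd x = true -> exists s, x ^ 2 = 8 * s + 1.
Proof.
  intros Hx. apply Z.odd_spec in Hx as [j ->].
  destruct (Z.Even_or_Odd j) as [[i ->] | [i ->]].
  - exists (2 * i * i + i). ring.
  - exists (2 * i * i + 3 * i + 1). ring.
Qed.

Lemma mod4_2_decomp (c : Z) : c mod 4 = 2 -> exists e, c = 4 * e + 2.
Proof. intros Hc. exists (c / 4). pose proof (Z.div_mod c 4). lia. Qed.

Lemma sqr_congr_odd_mod8 (q w X : Z) :
  Z.odd q = true -> Z.odd w = true -> (8 | X ^ 2 - q * w ^ 2) -> q mod 8 = 1.
Proof.
  intros Hq Hw [t Ht].
  destruct (odd_sqr_mod8 w Hw) as [s Hs]. rewrite Hs in Ht.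
  destruct (Z.Even_or_Odd X) as [[x ->] | HX].
  - apply Z.odd_spec in Hq as [j ->]. lia.
  - apply Z.odd_spec in HX. destruct (odd_sqr_mod8 X HX) as [s' Hs'].
    symmetry. apply Z.mod_unique_pos with (s' - q * s - t); lia.
Qed.

Lemma divide_sqr_sub_quarter (m R X : Z) :
  (4 * m | X ^ 2 - 4 * R) -> exists X', (m | X' ^ 2 - R).
Proof.
  intros [t Ht]. destruct (Z.Even_or_Odd X) as [[x ->] | [x ->]].
  - exists x, t. lia.
  - lia.
Qed.

Lemma sqr_congr_mod8_odd (q u Y X : Z) :
  Z.odd q = true -> Z.odd u = true -> Z.odd Y = true ->
  (8 * Y ^ 2 | X ^ 2 - q * Y ^ 2 * u ^ 2) -> q mod 8 = 1.
Proof.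
  intros Hq Hu HY HX. apply (sqr_congr_odd_mod8 q (Y * u) X Hq).
  - rewrite Z.odd_mul, HY, Hu. reflexivity.
  - apply Z.divide_trans with (8 * Y ^ 2); [exists (Y ^ 2); ring |].
    replace (q * (Y * u) ^ 2) with (q * Y ^ 2 * u ^ 2) by ring. exact HX.
Qed.

Lemma sqr_congr_mod8_pos (q u : Z) (p : positive) (X : Z) :
  Z.odd q = true -> Z.odd u = true ->
  (8 * Zpos p ^ 2 | X ^ 2 - q * Zpos p ^ 2 * u ^ 2) -> q mod 8 = 1.
Proof.
  intros Hq Hu. revert X.
  induction p as [p _ | p IH |]; intros X HX;
    [exact (sqr_congr_mod8_odd q u (Zpos p~1) X Hq Hu eq_refl HX) |
    | exact (sqr_congr_mod8_odd q u 1 X Hq Hu eq_refl HX)].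
  rewrite Pos2Z.inj_xO in HX.
  destruct (divide_sqr_sub_quarter (8 * Zpos p ^ 2) (q * Zpos p ^ 2 * u ^ 2) X)
    as [X' HX'].
  - replace (4 * (8 * Zpos p ^ 2)) with (8 * (2 * Zpos p) ^ 2) by ring.
    replace (4 * (q * Zpos p ^ 2 * u ^ 2)) with (q * (2 * Zpos p) ^ 2 * u ^ 2) by ring.
    exact HX.
  - exact (IH X' HX').
Qed.

Lemma sqr_congr_mod8 (q u Y X : Z) :
  Z.odd q = true -> Z.odd u = true -> Y <> 0 ->
  (8 * Y ^ 2 | X ^ 2 - q * Y ^ 2 * u ^ 2) -> q mod 8 = 1.
Proof.
  intros Hq Hu HY HX. rewrite (Z.pow_even_abs Y 2) in HX by (exists 1; ring).
  destruct (Z.abs Y) as [| p | p] eqn:HabsY.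
  - lia.
  - exact (sqr_congr_mod8_pos q u p X Hq Hu HX).
  - pose proof (Z.abs_nonneg Y). lia.
Qed.

Fixpoint odd_part (p : positive) : positive :=
  match p with
  | xO p' => odd_part p'
  | _ => p
  end.

Lemma odd_part_odd (p : positive) : Z.odd (Zpos (odd_part p)) = true.
Proof. induction p; simpl; auto. Qed.

Lemma solution_parity (a b c x y z : Z) :
  Z.odd a = true -> c mod 4 = 2 -> Z.odd x = true -> Z.odd y = false ->
  a * x ^ 2 + b * y ^ 2 <> c * z ^ 2.
Proof.
  intros Ha Hc Hx Hy He.
  destruct (mod4_2_decomp c Hc) as [e ->].
  apply (f_equal Z.odd) in He.
  rewrite Z.odd_add, !Z.odd_mul, !Z.odd_pow, Ha, Hx, Hy in He by lia.
  replace (4 * e + 2) with (2 * (2 * e + 1)) in He by ring.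
  rewrite Z.odd_even in He. destruct (Z.odd b); discriminate.
Qed.

Lemma solution_odd_part (a b c : Z) (x y : positive) (z : Z) :
  Z.odd a = true -> Z.odd b = true -> c mod 4 = 2 ->
  a * Zpos x ^ 2 + b * Zpos y ^ 2 = c * z ^ 2 ->
  exists z', a * Zpos (odd_part x) ^ 2 + b * Zpos (odd_part y) ^ 2 = c * z' ^ 2.
Proof.
  intros Ha Hb Hc. revert y z.
  induction x as [x _ | x IH |]; intros [y | y |] z He;
    try (exists z; exact He);
    try (exfalso; refine (solution_parity a b c _ _ z Ha Hc _ _ He); reflexivity);
    try (exfalso; rewrite Z.add_comm in He;
         refine (solution_parity b a c _ _ z Hb Hc _ _ He); reflexivity).
  rewrite (Pos2Z.inj_xO x), (Pos2Z.inj_xO y) in He. simpl.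
  destruct (mod4_2_decomp c Hc) as [e He4].
  destruct (Z.Even_or_Odd z) as [[s ->] | [s ->]].
  - apply (IH y s). lia.
  - (* c z^2 = 2 mod 4, whereas the left side is divisible by 4 *)
    subst c. lia.
Qed.

Lemma sqr_congr_of_solution (a b c k u w z : Z) :
  a * b * (a + b) * c = k * k -> a * u ^ 2 + b * w ^ 2 = c * z ^ 2 ->
  (k * z) ^ 2 - a * b * (a + b) ^ 2 * u ^ 2 = a * b * (a + b) * b * ((w - u) * (w + u)).
Proof.
  intros Hk He.
  replace ((k * z) ^ 2) with (a * b * (a + b) * (c * z ^ 2))
    by (rewrite Z.mul_assoc, Hk; ring).
  rewrite <- He. ring.
Qed.

Lemma divide_diff_mul_sum_odd (m u w : Z) :
  Z.odd u = true -> Z.odd w = true -> (m | w - u) -> (2 * m | (w - u) * (w + u)).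
Proof.
  intros Hu Hw [s Hs].
  apply Z.odd_spec in Hu as [i Hi]. apply Z.odd_spec in Hw as [j Hj].
  exists (s * (i + j + 1)). rewrite Hs, Hi, Hj. ring.
Qed.

Definition odd_part_color (m n : Z) : nat :=
  match n with
  | Zpos p => Z.to_nat (Zpos (odd_part p) mod m)
  | _ => 0%nat
  end.

Lemma odd_part_color_lt (m n : Z) : 0 < m -> 0 < n -> (odd_part_color m n < Z.to_nat m)%nat.
Proof.
  intros Hm Hn. destruct n as [| p | p]; try lia. simpl.
  pose proof (Z.mod_pos_bound (Zpos (odd_part p)) m Hm). lia.
Qed.

Lemma odd_part_color_eq (m : Z) (x y : positive) : 0 < m ->
  odd_part_color m (Zpos x) = odd_part_color m (Zpos y) ->
  (m | Zpos (odd_part y) - Zpos (odd_part x)).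
Proof.
  intros Hm Hcol. simpl in Hcol.
  pose proof (Z.mod_pos_bound (Zpos (odd_part x)) m Hm).
  pose proof (Z.mod_pos_bound (Zpos (odd_part y)) m Hm).
  apply Z2Nat.inj in Hcol; [| lia | lia].
  apply Z.mod_divide; [lia |].
  rewrite Zminus_mod, Hcol, Z.sub_diag. reflexivity.
Qed.

Theorem propositionP (a b c : Z) :
  Z.odd a = true -> Z.odd b = true -> c mod 4 = 2 ->
  a * b * (a + b) * c <> 0 -> is_square (a * b * (a + b) * c) ->
  partition_regular_xy a b c ->
  (a * b) mod 8 = 1.
Proof.
  intros Ha Hb Hc Hne [k Hk] HPR.
  assert (HD : a + b <> 0) by (intro H; apply Hne; rewrite H; ring).
  set (m := 4 * (a + b) ^ 2).
  assert (Hm : 0 < m) by (unfold m; nia).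
  destruct (HPR (Z.to_nat m) (odd_part_color m) (fun n => odd_part_color_lt m n Hm))
    as (x & y & z & Hx & Hy & _ & _ & Hcol & He).
  destruct x as [| x | x]; try lia. destruct y as [| y | y]; try lia.
  destruct (solution_odd_part a b c x y z Ha Hb Hc He) as [z' He'].
  apply (sqr_congr_mod8 (a * b) (Zpos (odd_part x)) (a + b) (k * z')).
  - rewrite Z.odd_mul, Ha, Hb. reflexivity.
  - apply odd_part_odd.
  - exact HD.
  - rewrite (sqr_congr_of_solution a b c k _ (Zpos (odd_part y)) z' Hk He').
    apply Z.divide_mul_r.
    replace (8 * (a + b) ^ 2) with (2 * m) by (unfold m; ring).
    apply divide_diff_mul_sum_odd; try apply odd_part_odd.
    exact (odd_part_color_eq m x y Hm Hcol).
Qed.
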